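(* Let $q$ be a prime power. For $i=1,2$, let $\mathcal{C}_i$ be an $[n,k_i,d_i]_q$ linear code with generator matrix $G_i$, and let $\mathcal{C}=\{(\mathbf{u},\mathbf{u}+\mathbf{v}):\ \mathbf{u}\in\mathcal{C}_1,\ \mathbf{v}\in\mathcal{C}_2\}\subseteq\mathbb{F}_q^{2n}$. Then: 1) $\mathcal{C}$ is a $[2n,k_1+k_2,\min\{2d_1,d_2\}]_q$ linear code with generator matrix $\begin{pmatrix} G_1 & G_1\\ O_{k_2\times n} & G_2\end{pmatrix}$. 2) (Euclidean case) Let $l_2=\dim(\mathrm{Hull}_E(\mathcal{C}_2))$. If $q=2^m$ for some $m$, or $\mathcal{C}_1$ is Euclidean self-orthogonal, then $$2\dim(\mathcal{C}_1\cap\mathcal{C}_2^{\perp_E})+l_2-k_1\le \dim(\mathrm{Hull}_E(\mathcal{C}))\le 2\dim(\mathcal{C}_1\cap\mathcal{C}_2^{\perp_E})+k_2-k_1;$$ moreover, if in addition $\mathcal{C}_2$ is Euclidean self-orthogonal, then $\dim(\mathrm{Hull}_E(\mathcal{C}))=2\dim(\mathcal{C}_1\cap\mathcal{C}_2^{\perp_E})+k_2-k_1$. 3) (Hermitian case, $q$ an even power of a prime) Let $l_2=\dim(\mathrm{Hull}_H(\mathcal{C}_2))$. If $q=2^m$ for some $m$, or $\mathcal{C}_1$ is Hermitian self-orthogonal, then $$2\dim(\mathcal{C}_1\cap\mathcal{C}_2^{\perp_H})+l_2-k_1\le \dim(\mathrm{Hull}_H(\mathcal{C}))\le 2\dim(\mathcal{C}_1\cap\mathcal{C}_2^{\perp_H})+k_2-k_1;$$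 moreover, if in addition $\mathcal{C}_2$ is Hermitian self-orthogonal, then $\dim(\mathrm{Hull}_H(\mathcal{C}))=2\dim(\mathcal{C}_1\cap\mathcal{C}_2^{\perp_H})+k_2-k_1$.
   Context: An $[n,k,d]_q$ code is a $k$-dimensional subspace of $\mathbb{F}_q^n$ with minimum Hamming distance $d$. Euclidean inner product $(\mathbf{x},\mathbf{y})_E=\sum_i x_iy_i$; when $q=p^h$ with $h$ even, Hermitian inner product $(\mathbf{x},\mathbf{y})_H=\sum_i x_iy_i^{\sqrt q}$. $\mathcal{C}^{\perp_E},\mathcal{C}^{\perp_H}$ are the corresponding duals, $\mathrm{Hull}_E(\mathcal{C})=\mathcal{C}\cap\mathcal{C}^{\perp_E}$, $\mathrm{Hull}_H(\mathcal{C})=\mathcal{C}\cap\mathcal{C}^{\perp_H}$. A code is Euclidean (resp. Hermitian) self-orthogonal if $\mathcal{C}\subseteq\mathcal{C}^{\perp_E}$ (resp. $\mathcal{C}\subseteq\mathcal{C}^{\perp_H}$). *)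

(* linear codes over a finite field F as row spaces of matrices. *)
From HB Require Import structures.
From mathcomp Require Import all_boot all_order all_algebra.
Set Implicit Arguments. Unset Strict Implicit. Unset Printing Implicit Defensive.
Import Order.TTheory GRing.Theory Num.Theory.
Local Open Scope ring_scope.

Section Codes.
Variable F : finFieldType.

Definition hdist n (u v : 'rV[F]_n) : nat := #|[set i : 'I_n | u 0 i != v 0 i]|.

Definition min_dist m n (C : 'M[F]_(m, n)) (d : nat) : Prop :=
  (exists u v : 'rV[F]_n, [/\ (u <= C)%MS, (v <= C)%MS, u != v & hdist u v = d]) /\
  (forall u v : 'rV[F]_n, (u <= C)%MS -> (v <= C)%MS -> u != v -> (d <= hdist u v)%N).

Definition edual m n (C : 'M[F]_(m, n)) : 'M[F]_n := kermx C^T.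

(* Hermitian dual, for the conjugation x |-> x ^+ r (r = sqrt q):
   {x | (x, c)_H = sum_i x_i c_i^r = 0 for every row c of C}. *)
Definition hconj m n (r : nat) (C : 'M[F]_(m, n)) : 'M[F]_(m, n) :=
  map_mx (fun x => x ^+ r) C.
Definition hdual m n (r : nat) (C : 'M[F]_(m, n)) : 'M[F]_n := kermx (hconj r C)^T.

Definition hullE m n (C : 'M[F]_(m, n)) : 'M[F]_n := (C :&: edual C)%MS.
Definition hullH m n (r : nat) (C : 'M[F]_(m, n)) : 'M[F]_n := (C :&: hdual r C)%MS.

Definition self_orthE m n (C : 'M[F]_(m, n)) : bool := (C <= edual C)%MS.
Definition self_orthH m n (r : nat) (C : 'M[F]_(m, n)) : bool := (C <= hdual r C)%MS.

End Codes.

From HB Require Import structures.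
From mathcomp Require Import all_boot all_order all_algebra.
From mathcomp Require Import zify finfield.
Import GRing.Theory.
Local Open Scope ring_scope.
Set Implicit Arguments. Unset Strict Implicit. Unset Printing Implicit Defensive.

(* The generator [block_mx G1 G1 0 G2] is [diag G1 G2] times the invertible
   matrix [1 1; 0 1], so C has dimension k1 + k2.  A nonzero codeword (u, u + v)
   has weight 2 wt(u) when v = 0, and at least wt(u) + wt(u + v) >= wt(v) otherwise.

   Both hulls are radicals of the form <x, y> = x (y^f)^T for an involutive field
   automorphism f (the identity, resp. x |-> x^sqrt(q)), and for a row-free
   generator G the hull has dimension rank G - rank (G (G^f)^T).  The Gram matrix of
   the Plotkin generator is [2 G1 G1^f^T, Q; Q^f^T, S] with Q = G1 G2^f^T and
   S = G2 G2^f^T.  Characteristic 2 or self-orthogonality of C1 kills the corner,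
   whence 2 rank Q <= rank Gram <= 2 rank Q + rank S, while
   rank Q = k1 - dim (C1 :&: C2^perp) and rank S = k2 - l2. *)

Section FrobeniusPower.
Variables (R : comNzRingType) (p k : nat).
Hypothesis pcharRp : p \in [pchar R].

(* As for [pFrobenius_aut], the characteristic proof is a phantom argument that
   carries the ring morphism instance. *)
Definition frobenius_pow of p \in [pchar R] := fun x : R => x ^+ (p ^ k).

Fact frobenius_pow_is_nmod_morphism : nmod_morphism (frobenius_pow pcharRp).
Proof.
have p_pr := pcharf_prime pcharRp.
split=> [|x y]; first by rewrite /frobenius_pow expr0n eqn0Ngt expn_gt0 prime_gt0.
by apply: exprDn_pchar; rewrite pnatX (pnatE _ p_pr) pcharRp.
Qed.

Fact frobenius_pow_is_monoid_morphism : monoid_morphism (frobenius_pow pcharRp).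
Proof. by split=> [|x y]; rewrite /frobenius_pow ?expr1n ?exprMn. Qed.

HB.instance Definition _ := GRing.isNmodMorphism.Build R R (frobenius_pow pcharRp)
  frobenius_pow_is_nmod_morphism.
HB.instance Definition _ := GRing.isMonoidMorphism.Build R R (frobenius_pow pcharRp)
  frobenius_pow_is_monoid_morphism.

End FrobeniusPower.

Lemma frobenius_pow_halfK (F : finFieldType) p h (pcharFp : p \in [pchar F]) :
  #|F| = (p ^ h)%N -> ~~ odd h -> involutive (frobenius_pow h./2 pcharFp).
Proof.
move=> cardF evenh x; rewrite /frobenius_pow -exprM -expnD addnn.
have ->: h./2.*2 = h by rewrite -[RHS]odd_double_half (negbTE evenh).
by rewrite -cardF expf_card.
Qed.

Section PlotkinSum.
Variable F : fieldType.

Definition plotkin_mx m1 m2 n (A : 'M[F]_(m1, n)) (B : 'M[F]_(m2, n)) :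
  'M_(m1 + m2, n + n) := block_mx A A 0 B.

Lemma sub_plotkinP m1 m2 n (A : 'M[F]_(m1, n)) (B : 'M[F]_(m2, n)) (w : 'rV_(n + n)) :
  (w <= plotkin_mx A B)%MS <->
  exists u v, [/\ (u <= A)%MS, (v <= B)%MS & w = row_mx u (u + v)].
Proof.
split=> [/submxP[x ->] | [_ [_ [/submxP[x ->] /submxP[y ->] ->]]]].
  rewrite -[x]hsubmxK mul_row_block mulmx0 addr0.
  by exists (lsubmx x *m A), (rsubmx x *m B); rewrite !submxMl.
by apply/submxP; exists (row_mx x y); rewrite mul_row_block mulmx0 addr0.
Qed.

Lemma mxrank_plotkin m1 m2 n (A : 'M[F]_(m1, n)) (B : 'M[F]_(m2, n)) :
  \rank (plotkin_mx A B) = (\rank A + \rank B)%N.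
Proof.
pose U : 'M[F]_(n + n) := block_mx 1%:M 1%:M 0 1%:M.
have U_free : row_free U by rewrite row_free_unit unitmxE det_ublock !det1 mulr1 unitr1.
have -> : plotkin_mx A B = block_mx A 0 0 B *m U.
  by rewrite mulmx_block !mulmx0 !mul0mx !mulmx1 !addr0 add0r.
by rewrite mxrankMfree // rank_diag_block_mx.
Qed.

Lemma mxrank_block0_le m1 m2 n1 n2 (Q : 'M[F]_(m1, n2)) (R : 'M[F]_(m2, n1))
    (S : 'M[F]_(m2, n2)) :
  (\rank (block_mx 0 Q R S) <= \rank Q + \rank R + \rank S)%N.
Proof.
rewrite block_mxEv -addsmxE; apply: leq_trans (mxrank_adds_leqif _ _) _.
rewrite rank_row_0mx -addnA leq_add2l -mxrank_tr tr_row_mx -addsmxE.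
by apply: leq_trans (mxrank_adds_leqif _ _) _; rewrite !mxrank_tr.
Qed.

Lemma mxrank_block0_ge m1 m2 n1 n2 (Q : 'M[F]_(m1, n2)) (R : 'M[F]_(m2, n1))
    (S : 'M[F]_(m2, n2)) :
  (\rank Q + \rank R <= \rank (block_mx 0 Q R S))%N.
Proof.
set M := block_mx 0 Q R S; pose P : 'M[F]_(n1 + n2, n1) := col_mx 1%:M 0.
rewrite -(mxrank_mul_ker M P) [X in (_ <= X)%N]addnC leq_add //.
  rewrite -(rank_row_0mx n1 Q); apply: mxrankS; rewrite sub_capmx.
  by rewrite /M block_mxEv -addsmxE addsmxSl sub_kermx mul_row_col mul0mx mulmx0 addr0 eqxx.
by rewrite /M /P mul_block_col !mulmx0 !mulmx1 !addr0 rank_col_0mx.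
Qed.

End PlotkinSum.

Section HammingDistance.
Variable F : finFieldType.

Lemma hdistE n (u v : 'rV[F]_n) : hdist u v = (\sum_(i < n) (u 0%R i != v 0%R i))%N.
Proof. by rewrite /hdist -sum1_card big_mkcond; apply: eq_bigr => i _; rewrite inE. Qed.

Lemma hdistC n (u v : 'rV[F]_n) : hdist u v = hdist v u.
Proof. by rewrite !hdistE; apply: eq_bigr => i _; rewrite eq_sym. Qed.

Lemma hdistxx n (u : 'rV[F]_n) : hdist u u = 0%N.
Proof. by rewrite hdistE big1 // => i _; rewrite eqxx. Qed.

Lemma hdist_triangle n (u v w : 'rV[F]_n) : (hdist u w <= hdist u v + hdist v w)%N.
Proof.
rewrite !hdistE -big_split /=; apply: leq_sum => i _.
have [->|_] := eqVneq (u 0%R i) (v 0%R i); first by [].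
exact: leq_trans (leq_b1 _) (leq_addr _ _).
Qed.

Lemma hdist_addr n (u v w : 'rV[F]_n) : hdist (u + w) (v + w) = hdist u v.
Proof. by rewrite !hdistE; apply: eq_bigr => i _; rewrite !mxE (inj_eq (addIr _)). Qed.

Lemma hdist_row_mx n1 n2 (u1 v1 : 'rV[F]_n1) (u2 v2 : 'rV[F]_n2) :
  hdist (row_mx u1 u2) (row_mx v1 v2) = (hdist u1 v1 + hdist u2 v2)%N.
Proof.
by rewrite !hdistE big_split_ord; congr (_ + _)%N; apply: eq_bigr => i _;
  rewrite ?row_mxEl ?row_mxEr.
Qed.

Lemma min_dist_eqmx m1 m2 n (A : 'M[F]_(m1, n)) (B : 'M[F]_(m2, n)) d :
  (A :=: B)%MS -> min_dist A d -> min_dist B d.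
Proof.
move=> eqAB [[u [v [Au Av neq_uv duv]]] A_min].
split=> [|x y]; last by rewrite -!eqAB; exact: A_min.
by exists u, v; rewrite -!eqAB.
Qed.

Lemma min_dist_plotkin m1 m2 n (A : 'M[F]_(m1, n)) (B : 'M[F]_(m2, n)) d1 d2 :
  min_dist A d1 -> min_dist B d2 -> min_dist (plotkin_mx A B) (minn (2 * d1) d2).
Proof.
move=> [[u1 [u2 [Au1 Au2 u12 du]]] A_min] [[v1 [v2 [Bv1 Bv2 v12 dv]]] B_min].
split=> [|_ _ /sub_plotkinP[a [b [Aa Bb ->]]] /sub_plotkinP[c [d [Ac Bd ->]]] w12].
  have [le_d|lt_d] := leqP (2 * d1) d2.
    exists (row_mx u1 (u1 + 0)), (row_mx u2 (u2 + 0)); split.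
    - by apply/sub_plotkinP; exists u1, 0; rewrite sub0mx.
    - by apply/sub_plotkinP; exists u2, 0; rewrite sub0mx.
    - by apply: contra_neq u12 => /eq_row_mx[].
    - by rewrite hdist_row_mx hdist_addr du; lia.
  exists (row_mx 0 (0 + v1)), (row_mx 0 (0 + v2)); split.
  - by apply/sub_plotkinP; exists 0, v1; rewrite sub0mx.
  - by apply/sub_plotkinP; exists 0, v2; rewrite sub0mx.
  - by apply: contra_neq v12 => /eq_row_mx[_]; rewrite !add0r.
  - by rewrite hdist_row_mx hdistxx !add0r dv; lia.
rewrite hdist_row_mx geq_min; have [eq_bd|neq_bd] := eqVneq b d.
  have neq_ac : a != c by apply: contraNneq w12 => ->; rewrite eq_bd.
  by rewrite eq_bd hdist_addr mul2n -addnn leq_add ?A_min.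
have : (hdist b d <= hdist (a + b) (c + d) + hdist c a)%N.
  rewrite -(hdist_addr b d a) -(hdist_addr c a d) [b + a]addrC [d + a]addrC.
  exact: hdist_triangle.
by rewrite [hdist c a]hdistC addnC => /(leq_trans (B_min _ _ Bb Bd neq_bd)) ->; rewrite orbT.
Qed.

End HammingDistance.

Section SesquilinearHull.
Variables (F : fieldType) (f : {rmorphism F -> F}).
Hypothesis fK : involutive f.
Local Notation "A ^f" := (map_mx f A).

Definition fdual m n (A : 'M[F]_(m, n)) : 'M[F]_n := kermx (A^f)^T.
Definition fhull m n (A : 'M[F]_(m, n)) : 'M[F]_n := (A :&: fdual A)%MS.

Lemma fdualS m1 m2 n (A : 'M[F]_(m1, n)) (B : 'M[F]_(m2, n)) :
  (A <= B)%MS -> (fdual B <= fdual A)%MS.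
Proof.
case/submxP=> X ->; apply/sub_kermxP.
by rewrite map_mxM trmx_mul mulmxA mulmx_ker mul0mx.
Qed.

Lemma eqmx_fdual m1 m2 n (A : 'M[F]_(m1, n)) (B : 'M[F]_(m2, n)) :
  (A :=: B)%MS -> (fdual A :=: fdual B)%MS.
Proof. by move=> eqAB; apply/eqmxP; rewrite !fdualS ?eqAB. Qed.

Lemma mxrank_fhull_eqmx m1 m2 n (A : 'M[F]_(m1, n)) (B : 'M[F]_(m2, n)) :
  (A :=: B)%MS -> \rank (fhull A) = \rank (fhull B).
Proof. by move=> eqAB; rewrite (cap_eqmx eqAB (eqmx_fdual eqAB)). Qed.

Lemma trmx_map_gram m1 m2 n (A : 'M[F]_(m1, n)) (B : 'M[F]_(m2, n)) :
  ((A *m (B^f)^T)^f)^T = B *m (A^f)^T.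
Proof.
by rewrite map_mxM -map_trmx -map_mx_comp (map_mx_id (fK : f \o f =1 id)) trmx_mul trmxK.
Qed.

Lemma plotkin_gram m1 m2 n (A : 'M[F]_(m1, n)) (B : 'M[F]_(m2, n)) :
  plotkin_mx A B *m ((plotkin_mx A B)^f)^T =
  block_mx ((A *m (A^f)^T) *+ 2) (A *m (B^f)^T) (B *m (A^f)^T) (B *m (B^f)^T).
Proof.
rewrite /plotkin_mx map_block_mx map_mx0 tr_block_mx trmx0 mulmx_block.
by rewrite !mulmx0 !mul0mx !add0r mulr2n.
Qed.

Lemma mxrank_plotkin_fhull k1 k2 n (G1 : 'M[F]_(k1, n)) (G2 : 'M[F]_(k2, n)) :
  row_free G1 -> row_free G2 -> (G1 *m (G1^f)^T) *+ 2 = 0 ->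
  let a := \rank (G1 :&: fdual G2) in
  let l2 := \rank (fhull G2) in
  let h := \rank (fhull (plotkin_mx G1 G2)) in
  [/\ (2 * a + l2 <= h + k1)%N, (h + k1 <= 2 * a + k2)%N &
      (G2 <= fdual G2)%MS -> (h + k1 = 2 * a + k2)%N].
Proof.
move=> free1 free2 G1_iso a l2 h; set G := plotkin_mx G1 G2.
set Q := G1 *m (G2^f)^T; set S := G2 *m (G2^f)^T.
have rkG : \rank G = (k1 + k2)%N by rewrite mxrank_plotkin (eqP free1) (eqP free2).
have rk_gram : (\rank Q + \rank Q <= \rank (G *m (G^f)^T) <= \rank Q + \rank Q + \rank S)%N.
  have rkQ' : \rank (Q^f)^T = \rank Q by rewrite mxrank_tr mxrank_map.
  have := mxrank_block0_ge Q (Q^f)^T S; have := mxrank_block0_le Q (Q^f)^T S.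
  by rewrite rkQ' plotkin_gram G1_iso trmx_map_gram => -> ->.
have rk_h : (\rank (G *m (G^f)^T) + h)%N = (k1 + k2)%N.
  by rewrite -[RHS]rkG; exact: mxrank_mul_ker.
have rk_a : (\rank Q + a)%N = k1 by rewrite -[RHS](eqP free1); exact: mxrank_mul_ker.
have rk_l2 : (\rank S + l2)%N = k2 by rewrite -[RHS](eqP free2); exact: mxrank_mul_ker.
have rkS0 : (G2 <= fdual G2)%MS -> \rank S = 0%N.
  by rewrite sub_kermx -/S => /eqP->; rewrite mxrank0.
case/andP: rk_gram; rewrite /a /l2 /h in rk_h rk_a rk_l2 * => ge_gram le_gram.
by split=> [|| /rkS0]; lia.
Qed.

Lemma plotkin_fhull_bounds k1 k2 n m (G1 : 'M[F]_(k1, n)) (G2 : 'M[F]_(k2, n))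
    (C : 'M[F]_(m, n + n)) :
  row_free G1 -> row_free G2 -> (plotkin_mx G1 G2 :=: C)%MS ->
  (2 \in [pchar F])%N \/ (G1 <= fdual G1)%MS ->
  let a := \rank (G1 :&: fdual G2) in
  let l2 := \rank (fhull G2) in
  let h := \rank (fhull C) in
  ((2 * a + l2)%:Z - k1%:Z <= h%:Z <= (2 * a + k2)%:Z - k1%:Z)
  /\ ((G2 <= fdual G2)%MS -> h%:Z = (2 * a + k2)%:Z - k1%:Z).
Proof.
move=> free1 free2 eqGC char2_or_iso a l2 h.
have G1_iso : (G1 *m (G1^f)^T) *+ 2 = 0.
  case: char2_or_iso => [char2|]; last by rewrite sub_kermx => /eqP->; rewrite mul0rn.
  by rewrite -scaler_nat (pcharf0 char2) scale0r.
have [] := mxrank_plotkin_fhull free1 free2 G1_iso.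
rewrite (mxrank_fhull_eqmx eqGC) -/a -/l2 -/h => lo hi eq.
by split=> [|/eq]; [apply/andP; split|]; lia.
Qed.

End SesquilinearHull.

Lemma fdual_id (F : finFieldType) m n (A : 'M[F]_(m, n)) : fdual idfun A = edual A.
Proof. by rewrite /fdual map_mx_id. Qed.

Theorem theorem2 (F : finFieldType) (n k1 k2 d1 d2 : nat)
    (G1 : 'M[F]_(k1, n)) (G2 : 'M[F]_(k2, n))
    (m : nat) (C : 'M[F]_(m, n + n)) :
  (* C_i is an [n, k_i, d_i]_q code with generator matrix G_i *)
  row_free G1 -> row_free G2 -> min_dist G1 d1 -> min_dist G2 d2 ->
  (* the row space of C is exactly {(u, u + v) : u in C_1, v in C_2} *)
  (forall w : 'rV[F]_(n + n),
     (w <= C)%MS <-> exists u v : 'rV[F]_n,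
        [/\ (u <= G1)%MS, (v <= G2)%MS & w = row_mx u (u + v)]) ->
  (* 1) *)
  let G : 'M[F]_(k1 + k2, n + n) := block_mx G1 G1 0 G2 in
  [/\ \rank C = (k1 + k2)%N, min_dist C (minn (2 * d1) d2),
      row_free G & (G == C)%MS]
  /\
  (* 2) Euclidean case *)
  (((exists e : nat, #|F| = (2 ^ e)%N) \/ self_orthE G1) ->
     let a := \rank (G1 :&: edual G2)%MS in
     let l2 := \rank (hullE G2) in
     let h := \rank (hullE C) in
     ((2 * a + l2)%:Z - k1%:Z <= h%:Z <= (2 * a + k2)%:Z - k1%:Z)
     /\ (self_orthE G2 -> h%:Z = (2 * a + k2)%:Z - k1%:Z))
  /\
  (* 3) Hermitian case: q = p^h with h even, conjugation x |-> x^(p^(h/2)) *)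
  (forall p h : nat, prime p -> #|F| = (p ^ h)%N -> ~~ odd h ->
     let r := (p ^ h./2)%N in
     ((exists e : nat, #|F| = (2 ^ e)%N) \/ self_orthH r G1) ->
     let a := \rank (G1 :&: hdual r G2)%MS in
     let l2 := \rank (hullH r G2) in
     let hh := \rank (hullH r C) in
     ((2 * a + l2)%:Z - k1%:Z <= hh%:Z <= (2 * a + k2)%:Z - k1%:Z)
     /\ (self_orthH r G2 -> hh%:Z = (2 * a + k2)%:Z - k1%:Z)).
Proof.
move=> free1 free2 md1 md2 defC G.
have eqGC : (G :=: C)%MS.
  by apply/eqmxP/andP; split; apply/rV_subP => w; rewrite defC sub_plotkinP.
have rkG : \rank G = (k1 + k2)%N by rewrite mxrank_plotkin (eqP free1) (eqP free2).
have char2 (e : nat) : #|F| = (2 ^ e)%N -> (2 \in [pchar F])%N.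
  by move/card_finPcharP; apply.
split; [|split].
- split; [by rewrite -eqGC | | by rewrite /row_free rkG | exact/eqmxP].
  exact: min_dist_eqmx eqGC (min_dist_plotkin md1 md2).
- move=> char2_or_iso; rewrite /hullE /self_orthE -!fdual_id.
  apply: plotkin_fhull_bounds => //.
  by case: char2_or_iso => [[e /char2]|]; [left | rewrite fdual_id; right].
- move=> p h p_pr cardF evenh r char2_or_iso.
  have pcharFp := card_finPcharP cardF p_pr.
  apply: (plotkin_fhull_bounds (frobenius_pow_halfK pcharFp cardF evenh)) => //.
  by case: char2_or_iso => [[e /char2]|]; [left | right].
Qed.
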